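(* Let $(\alpha_D)_D$ be a holomorphically contractible family of pseudometrics and $n\ge3$. There exist a domain $D\subset\mathbb{C}^n$ and subdomains $D_1\subset D_2\subset\dots\subset D$ with $\bigcup_{m\ge1}D_m=D$ such that $\widetilde{\mathbb W}\alpha_{D_m}$ does not converge (pointwise) to $\widetilde{\mathbb W}\alpha_D$ and $\mathbb W\alpha_{D_m}$ does not converge (pointwise) to $\mathbb W\alpha_D$ as $m\to\infty$.
   Context: $\Delta$ is the open unit disc in $\mathbb{C}$. A pseudometric on a domain $D\subset\mathbb{C}^n$ is a function $\eta:D\times\mathbb{C}^n\to[0,\infty)$ with $\eta(a;\lambda X)=|\lambda|\eta(a;X)$. A holomorphically contractible family of pseudometrics is an assignment of a pseudometric $\alpha_D$ to every domain $D\subset\mathbb{C}^n$, for all $n\ge1$, such that $\alpha_\Delta(z;X)=|X|/(1-|z|^2)$ and $\alpha_{D_2}(F(z);F'(z)X)\le\alpha_{D_1}(z;X)$ for all domains $D_1\subset\mathbb{C}^{n_1}$, $D_2\subset\mathbb{C}^{n_2}$, holomorphic $F:D_1\to D_2$, $z\in D_1$, $X\in\mathbb{C}^{n_1}$. (Such $\alpha_D$ lie in $\mathcal M(D)$.) $\mathcal M(D)$: pseudometrics $\eta$ on $D$ such that for every $a\in D$ there are $M,r>0$ with $\eta(z;X)\le M\|X\|$ for $z$ in the ball $\mathbb{B}(a,r)\subset D$, $X\in\mathbb{C}^n$. Wu pseudometric: for $\eta\in\mathcal M(D)$ and $a\in D$, let $\widehat\eta(a;X)=\sup p(X)$ over all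 $\mathbb{C}$-seminorms $p\le\eta(a;\cdot)$. Let $V_\eta(a)=\{X:\widehat\eta(a;X)=0\}$, $U_\eta(a)$ its orthogonal complement (standard Hermitian product), $m(\eta,a)=\dim U_\eta(a)$. Let $\mathcal F(\eta,a)$ be the set of positive semidefinite Hermitian forms $s$ on $\mathbb{C}^n$ with $\sqrt{s(X,X)}\le\eta(a;X)$ for all $X$, ordered by $\alpha\prec\beta$ iff $\det[\alpha(e_j,e_k)]\le\det[\beta(e_j,e_k)]$ for a basis $(e_j)$ of $U_\eta(a)$; it has a unique maximal element $s(\eta,a)$. Set $\widetilde{\mathbb W}\eta(a;X)=\sqrt{s(\eta,a)(X,X)}$ and $\mathbb W\eta(a;X)=\sqrt{m(\eta,a)}\,\widetilde{\mathbb W}\eta(a;X)$. *)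

From HB Require Import structures.
From mathcomp Require Import all_boot all_order all_algebra.
Import Order.TTheory GRing.Theory Num.Theory.
From mathcomp Require Import complex.
From mathcomp Require Import all_classical all_reals topology normedtype sequences.
From Stdlib Require Import ClassicalEpsilon.

Set Implicit Arguments.
Unset Strict Implicit.
Unset Printing Implicit Defensive.

Local Open Scope ring_scope.
Local Open Scope classical_set_scope.

Section Defs.
Variable R : realType.
Local Notation C := (R[i]).

Definition cabs (z : C) : R := Num.sqrt (complex.Re z ^+ 2 + complex.Im z ^+ 2).

Definition vnorm n (X : 'cV[C]_n) : R := Num.sqrt (\sum_(i < n) cabs (X i 0) ^+ 2).

Definition hprod n (X Y : 'cV[C]_n) : C := \sum_(i < n) X i 0 * conjc (Y i 0).

Definition cball n (a : 'cV[C]_n) (r : R) : set 'cV[C]_n :=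
  [set z | vnorm (z - a) < r].

Definition copen n (D : set 'cV[C]_n) : Prop :=
  forall a, D a -> exists2 r : R, 0 < r & cball a r `<=` D.

Definition domain n (D : set 'cV[C]_n) : Prop :=
  [/\ copen D, D !=set0 &
      forall A B : set 'cV[C]_n, copen A -> copen B -> D = A `|` B ->
        A `&` B = set0 -> A = set0 \/ B = set0].

Definition cderiv n1 n2 (F : 'cV[C]_n1 -> 'cV[C]_n2) (z : 'cV[C]_n1)
    (A : 'M[C]_(n2, n1)) : Prop :=
  forall eps : R, 0 < eps -> exists2 del : R, 0 < del &
    forall h : 'cV[C]_n1, vnorm h < del ->
      vnorm (F (z + h) - F z - A *m h) <= eps * vnorm h.

Definition holo_on n1 n2 (D : set 'cV[C]_n1) (F : 'cV[C]_n1 -> 'cV[C]_n2) : Prop :=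
  forall z, D z -> exists A, cderiv F z A.

Definition pseudometric n (D : set 'cV[C]_n) (eta : 'cV[C]_n -> 'cV[C]_n -> R) : Prop :=
  forall a, D a -> forall (X : 'cV[C]_n) (lam : C),
    0 <= eta a X /\ eta a (lam *: X) = cabs lam * eta a X.

Definition unit_disc : set 'cV[C]_1 := [set z | cabs (z 0 0) < 1].

Definition hol_contractible
    (alpha : forall n : nat, set 'cV[C]_n -> 'cV[C]_n -> 'cV[C]_n -> R) : Prop :=
  [/\ (forall n (D : set 'cV[C]_n), (0 < n)%N -> domain D -> pseudometric D (alpha n D)),
      (forall z X, unit_disc z ->
          alpha 1%N unit_disc z X = cabs (X 0 0) / (1 - cabs (z 0 0) ^+ 2)) &
      (forall n1 n2 (D1 : set 'cV[C]_n1) (D2 : set 'cV[C]_n2)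
              (F : 'cV[C]_n1 -> 'cV[C]_n2),
          (0 < n1)%N -> (0 < n2)%N -> domain D1 -> domain D2 ->
          holo_on D1 F -> F @` D1 `<=` D2 ->
          forall z A, D1 z -> cderiv F z A ->
          forall X, alpha n2 D2 (F z) (A *m X) <= alpha n1 D1 z X)].

Section Wu.
Variable n : nat.
Variable eta : 'cV[C]_n -> 'cV[C]_n -> R.

Definition cseminorm (p : 'cV[C]_n -> R) : Prop :=
  [/\ forall X, 0 <= p X,
      forall X Y, p (X + Y) <= p X + p Y &
      forall (lam : C) X, p (lam *: X) = cabs lam * p X].

Definition eta_hat (a X : 'cV[C]_n) : R :=
  sup [set p X | p in [set p | cseminorm p /\ forall Y, p Y <= eta a Y]].

Definition Vset (a : 'cV[C]_n) : set 'cV[C]_n := [set X | eta_hat a X = 0].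

Definition Uset (a : 'cV[C]_n) : set 'cV[C]_n :=
  [set Y | forall X, Vset a X -> hprod X Y = 0].

Definition is_basis (U : set 'cV[C]_n) k (e : 'I_k -> 'cV[C]_n) : Prop :=
  [/\ forall j, U (e j),
      forall Y, U Y -> exists c : 'I_k -> C, Y = \sum_(j < k) c j *: e j &
      forall c : 'I_k -> C, \sum_(j < k) c j *: e j = 0 -> forall j, c j = 0].

Definition mdim (a : 'cV[C]_n) : nat :=
  epsilon (inhabits 0%N) (fun k => exists e : 'I_k -> 'cV[C]_n, is_basis (Uset a) e).

Definition psd_hermitian (s : 'cV[C]_n -> 'cV[C]_n -> C) : Prop :=
  [/\ forall (a b : C) X Y Z, s (a *: X + b *: Y) Z = a * s X Z + b * s Y Z,
      forall X Y, s Y X = conjc (s X Y) &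
      forall X, 0 <= complex.Re (s X X)].

Definition Fset (a : 'cV[C]_n) : set ('cV[C]_n -> 'cV[C]_n -> C) :=
  [set s | psd_hermitian s /\
           forall X, Num.sqrt (complex.Re (s X X)) <= eta a X].

Definition gram_det (s : 'cV[C]_n -> 'cV[C]_n -> C) k (e : 'I_k -> 'cV[C]_n) : C :=
  \det (\matrix_(j < k, l < k) s (e j) (e l)).

Definition wprec (a : 'cV[C]_n) (s t : 'cV[C]_n -> 'cV[C]_n -> C) : Prop :=
  exists k (e : 'I_k -> 'cV[C]_n), is_basis (Uset a) e /\
    complex.Re (gram_det s e) <= complex.Re (gram_det t e).

Definition smax (a : 'cV[C]_n) : 'cV[C]_n -> 'cV[C]_n -> C :=
  epsilon (inhabits (fun _ _ => 0))
    (fun s => Fset a s /\ forall t, Fset a t -> wprec a t s).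

Definition Wt (a X : 'cV[C]_n) : R := Num.sqrt (complex.Re (smax a X X)).

Definition W (a X : 'cV[C]_n) : R := Num.sqrt (mdim a)%:R * Wt a X.

End Wu.
End Defs.

(* The construction works in C^n for every n >= 2.  Take D = {|z_0| < 1} and
   D_m = D /\ {|z_0 + z_1/(m+1)| < 5/4} /\ {|z_0 - z_1/(m+1)| < 5/4}, an increasing
   exhaustion of D by convex domains.  Contraction onto the unit disc along linear forms
   bounds alpha from below, contraction of complex lines into the domain bounds it from
   above.  At the origin alpha_D vanishes on {z_0 = 0} and dominates |z_0|, so U is spanned
   by e_0 and the maximal form is |z_0|^2: Wt and W of alpha_D at (0; e_0) equal 1.  For D_m,
   alpha dominates (4/5)|z_0 +- z_1/(m+1)| and is at most 4 sqrt 2 / 5 at e_0 +- i(m+1) e_1,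
   so U = span(e_0, e_1); the first bound provides a form of Gram determinant
   (16/25)^2/(m+1)^2, the second forces every admissible form to have t00 + (m+1)^2 t11 <= 32/25,
   and AM-GM then pins the maximal form to t00 = 16/25.  Hence Wt and W of alpha_{D_m} at
   (0; e_0) are the constants 4/5 and 4 sqrt 2 / 5, which do not tend to 1. *)

From HB Require Import structures.
From mathcomp Require Import all_boot all_order all_algebra.
Import Order.TTheory GRing.Theory Num.Theory.
From mathcomp Require Import complex.
From mathcomp Require Import all_classical all_reals topology normedtype sequences.
From mathcomp Require Import lra ring.
From Stdlib Require Import ClassicalEpsilon.

Import numFieldNormedType.Exports.
Set Implicit Arguments.
Unset Strict Implicit.
Unset Printing Implicit Defensive.
Local Open Scope classical_set_scope.
Local Open Scope complex_scope.
Local Open Scope ring_scope.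

Section CabsVnorm.
Variable R : realType.
Local Notation C := (R[i]).

Lemma cabsE (z : C) : (cabs z)%:C = `|z|.
Proof. by rewrite normc_def. Qed.

Lemma cabs_ge0 (z : C) : 0 <= cabs z.
Proof. exact: sqrtr_ge0. Qed.

Lemma cabs_gt0 (z : C) : z != 0 -> 0 < cabs z.
Proof. by move=> z0; rewrite -ltcR cabsE normr_gt0. Qed.

Lemma cabsD (x y : C) : cabs (x + y) <= cabs x + cabs y.
Proof. by rewrite -lecR rmorphD /= !cabsE ler_normD. Qed.

Lemma cabsM (x y : C) : cabs (x * y) = cabs x * cabs y.
Proof. by apply: complexI; rewrite rmorphM /= !cabsE normrM. Qed.

Lemma cabs0 : cabs (0 : C) = 0.
Proof. by apply: complexI; rewrite !cabsE normr0. Qed.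

Lemma cabs_real (x : R) : cabs x%:C = `|x|.
Proof. by rewrite /cabs /= expr0n /= addr0 sqrtr_sqr. Qed.

Lemma cabs_sqr (z : C) : cabs z ^+ 2 = complex.Re z ^+ 2 + complex.Im z ^+ 2.
Proof. by rewrite /cabs sqr_sqrtr // addr_ge0 // sqr_ge0. Qed.

Lemma vnorm_ge0 n (X : 'cV[C]_n) : 0 <= vnorm X.
Proof. exact: sqrtr_ge0. Qed.

Lemma vnormZ n (c : C) (X : 'cV[C]_n) : vnorm (c *: X) = cabs c * vnorm X.
Proof.
rewrite /vnorm; under eq_bigr => i _ do rewrite mxE cabsM exprMn.
by rewrite -mulr_sumr sqrtrM ?sqr_ge0 // sqrtr_sqr ger0_norm // cabs_ge0.
Qed.

Lemma vnorm0 n : vnorm (0 : 'cV[C]_n) = 0.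
Proof. by rewrite -(scale0r (0 : 'cV[C]_n)) vnormZ cabs0 mul0r. Qed.

Lemma cabs_le_vnorm n (X : 'cV[C]_n) i : cabs (X i 0) <= vnorm X.
Proof.
rewrite -(ger0_norm (cabs_ge0 (X i 0))) -sqrtr_sqr; apply: ler_wsqrtr.
by rewrite (bigD1 i) //= lerDl; apply: sumr_ge0 => j _; exact: sqr_ge0.
Qed.

End CabsVnorm.

Section StarlikeDomain.
Variables (R : realType) (n : nat).
Local Notation C := (R[i]).
Implicit Types D A B : set 'cV[C]_n.

Definition starlike D := forall z (t : R), D z -> 0 <= t <= 1 -> D (t%:C *: z).

Lemma open_copen_line A (z : 'cV[C]_n) : copen A -> open [set t : R | A (t%:C *: z)].
Proof.
move=> oA; rewrite openE => t /oA [r r0 rA]; apply/nbhs_normP.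
have z1 : 0 < vnorm z + 1 by rewrite ltr_wpDl ?vnorm_ge0.
exists (r / (vnorm z + 1)) => /=; first by rewrite divr_gt0.
move=> s; rewrite /ball_ /= => hs; apply: rA.
rewrite /cball /= -scalerBl -rmorphB vnormZ cabs_real distrC.
have := vnorm_ge0 z; have := normr_ge0 (t - s); rewrite ltr_pdivlMr // in hs; nra.
Qed.

Lemma starlike_split0 D A B : copen A -> copen B -> D = A `|` B -> A `&` B = set0 ->
  starlike D -> A 0 -> B = set0.
Proof.
move=> oA oB DAB AB0 sD A0; apply/seteqP; split=> // z Bz; exfalso.
have Dz : D z by rewrite DAB; right.
pose PA := [set t : R | A (t%:C *: z)]; pose PB := [set t : R | B (t%:C *: z)].
have PAB t : [set` `[0, 1]] t -> PA t \/ PB t.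
  by move=> /= ht; have := sD _ _ Dz; rewrite in_itv /= in ht; rewrite DAB; apply.
have PA_PB t : PA t -> PB t -> False.
  by move=> PAt PBt; have : (A `&` B) (t%:C *: z) by []; rewrite AB0.
have unit_itv t : (0 <= t <= 1) -> [set` `[0, 1]] t by rewrite /= in_itv.
have E : [set` `[0, 1]] `&` PA = [set` `[0, 1]].
  apply: segment_connected.
  - by exists 0; split; [apply: unit_itv; rewrite lexx ler01 | rewrite /PA /= scale0r].
  - by exists PA; [exact: open_copen_line |].
  - exists (~` PB); first exact/open_closedC/open_copen_line.
    apply/seteqP; split=> t [It Pt]; split=> //; first by move=> /(PA_PB _ Pt).
    by case: (PAB t It).
have : ([set` `[0, 1]] `&` PA) 1 by rewrite E; apply: unit_itv; rewrite ler01 lexx.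
by case=> _ PA1; apply: (PA_PB _ PA1); rewrite /PB /= rmorph1 scale1r.
Qed.

Lemma starlike_domain D : copen D -> D 0 -> starlike D -> domain D.
Proof.
move=> oD D0 sD; split=> //; first by exists 0.
move=> A B oA oB DAB AB0; have : (A `|` B) 0 by rewrite -DAB.
case=> [A0|B0]; first by right; exact: (starlike_split0 oA oB DAB AB0).
left; apply: (starlike_split0 (D := D) oB oA) => //; first by rewrite setUC.
by rewrite setIC.
Qed.

End StarlikeDomain.

Section Slabs.
Variable R : realType.
Local Notation C := (R[i]).

Definition linf N (p q : C) (i j : 'I_N) (z : 'cV[C]_N) : C := p * z i 0 + q * z j 0.

Definition slab N (p q : C) (i j : 'I_N) (b : R) : set 'cV[C]_N :=
  [set z | cabs (linf p q i j z) < b].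

Variables (N : nat) (p q : C) (i j : 'I_N).

Lemma linfD z1 z2 : linf p q i j (z1 + z2) = linf p q i j z1 + linf p q i j z2.
Proof. by rewrite /linf !mxE; ring. Qed.

Lemma linfZ (c : C) z : linf p q i j (c *: z) = c * linf p q i j z.
Proof. by rewrite /linf !mxE; ring. Qed.

Lemma cabs_linf_le z : cabs (linf p q i j z) <= (cabs p + cabs q) * vnorm z.
Proof.
apply: le_trans (cabsD _ _) _; rewrite !cabsM mulrDl.
by apply: lerD; apply: ler_wpM2l; rewrite ?cabs_ge0 ?cabs_le_vnorm.
Qed.

Lemma cseminorm_linf : cseminorm (fun z => cabs (linf p q i j z)).
Proof. by split=> [z|z1 z2|c z]; rewrite ?linfD ?linfZ ?cabsD ?cabsM ?cabs_ge0. Qed.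

Lemma copen_slab b : copen (slab p q i j b).
Proof.
move=> a; rewrite /slab /= => Ha.
set K := cabs p + cabs q + 1.
have K0 : 0 < K by rewrite /K ltr_pwDr // addr_ge0 ?cabs_ge0.
exists ((b - cabs (linf p q i j a)) / K); first by rewrite divr_gt0 // subr_gt0.
move=> z; rewrite /cball /= => hz.
rewrite -(subrK a z) addrC /slab /= linfD; apply: le_lt_trans (cabsD _ _) _.
have := cabs_linf_le (z - a); have := vnorm_ge0 (z - a).
have : cabs p + cabs q <= K by rewrite /K lerDl.
rewrite ltr_pdivlMr // in hz; nra.
Qed.

Lemma starlike_slab b : starlike (slab p q i j b).
Proof.
move=> z t; rewrite /slab /= => hz /andP[t0 t1].
rewrite linfZ cabsM cabs_real ger0_norm //.
by apply: le_lt_trans hz; rewrite ler_piMl ?cabs_ge0.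
Qed.

Lemma slab0 b : 0 < b -> slab p q i j b 0.
Proof. by move=> b0; rewrite /slab /linf /= !mxE !mulr0 addr0 cabs0. Qed.

End Slabs.

Lemma copenI (R : realType) N (A B : set 'cV[R[i]]_N) :
  copen A -> copen B -> copen (A `&` B).
Proof.
move=> oA oB a [Aa Ba]; have [r r0 hr] := oA a Aa; have [s s0 hs] := oB a Ba.
exists (Num.min r s); first by rewrite lt_min r0 s0.
by move=> z hz; split; [apply: hr | apply: hs]; apply: lt_le_trans hz _;
  rewrite ge_min lexx ?orbT.
Qed.

Lemma starlikeI (R : realType) N (A B : set 'cV[R[i]]_N) :
  starlike A -> starlike B -> starlike (A `&` B).
Proof. by move=> sA sB z t [Az Bz] ht; split; [apply: sA | apply: sB]. Qed.

Lemma domain_slab (R : realType) N (p q : R[i]) (i j : 'I_N) b :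
  0 < b -> domain (slab p q i j b).
Proof. by move=> b0; apply: starlike_domain; [exact: copen_slab | exact: slab0 | exact: starlike_slab]. Qed.

Section Contractible.
Variable R : realType.
Local Notation C := (R[i]).

Lemma cderiv_mulmx n1 n2 (A : 'M[C]_(n2, n1)) z : cderiv (mulmx A) z A.
Proof.
move=> eps e0; exists 1 => // h _.
rewrite mulmxDr [A *m z + _]addrC addrK subrr vnorm0.
by rewrite mulr_ge0 ?vnorm_ge0 // ltW.
Qed.

Lemma holo_on_mulmx n1 n2 (D : set 'cV[C]_n1) (A : 'M[C]_(n2, n1)) : holo_on D (mulmx A).
Proof. by move=> z _; exists A; exact: cderiv_mulmx. Qed.

Lemma unit_disc_slab : @unit_disc R = slab 1 0 (0 : 'I_1) 0 1.
Proof. by apply/funext => z; rewrite /slab /linf /= mul1r mul0r addr0. Qed.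

Lemma domain_unit_disc : domain (@unit_disc R).
Proof. by rewrite unit_disc_slab; apply: domain_slab. Qed.

Definition linf_mx N (p q : C) (i j : 'I_N) : 'M[C]_(1, N) := p *: 'e_i + q *: 'e_j.

Lemma linf_mxE N p q (i j : 'I_N) X : (linf_mx p q i j *m X) 0 0 = linf p q i j X.
Proof. by rewrite /linf_mx mulmxDl -!scalemxAl -!rowE !mxE. Qed.

Unset Implicit Arguments.
Variable alpha : forall n : nat, set 'cV[C]_n -> 'cV[C]_n -> 'cV[C]_n -> R.
Set Implicit Arguments.
Hypothesis Halpha : hol_contractible alpha.
Variables (N : nat) (D : set 'cV[C]_N).
Hypotheses (N_gt0 : (0 < N)%N) (domD : domain D) (D0 : D 0).

Lemma alpha_disc0 X : alpha 1%N (@unit_disc R) 0 X = cabs (X 0 0).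
Proof.
case: Halpha => _ H _; rewrite H; last by rewrite /unit_disc /= mxE cabs0 ltr01.
by rewrite mxE cabs0 expr0n /= subr0 divr1.
Qed.

Lemma alpha_ge0 X : 0 <= alpha N D 0 X.
Proof. by case: Halpha => H _ _; have [-> _] := H N D N_gt0 domD 0 D0 X 0. Qed.

Lemma alphaZ (c : C) X : alpha N D 0 (c *: X) = cabs c * alpha N D 0 X.
Proof. by case: Halpha => H _ _; have [_ ->] := H N D N_gt0 domD 0 D0 X c. Qed.

(* Contraction along the linear form [linf p q i j], which maps [D] into the disc. *)
Lemma cabs_linf_le_alpha p q (i j : 'I_N) X :
  (forall z, D z -> cabs (linf p q i j z) < 1) -> cabs (linf p q i j X) <= alpha N D 0 X.
Proof.
move=> hD; case: Halpha => _ _ H.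
have := H N 1%N D (@unit_disc R) (mulmx (linf_mx p q i j)) N_gt0 isT domD domain_unit_disc
  (@holo_on_mulmx _ _ D (linf_mx p q i j)) _ 0 _ D0 (@cderiv_mulmx _ _ _ _) X.
rewrite mulmx0 alpha_disc0 linf_mxE; apply.
by move=> _ [x Dx <-]; rewrite /unit_disc /= linf_mxE; apply: hD.
Qed.

(* Contraction along the disc [zeta |-> zeta v], which lies in [D]. *)
Lemma alpha_le1 (v : 'cV[C]_N) :
  (forall zeta : C, cabs zeta < 1 -> D (zeta *: v)) -> alpha N D 0 v <= 1.
Proof.
move=> hD; case: Halpha => _ _ H.
have := H 1%N N (@unit_disc R) D (mulmx v) isT N_gt0 domain_unit_disc domD
  (@holo_on_mulmx _ _ _ v) _ 0 _ _ (@cderiv_mulmx _ _ _ _) 1%:M.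
rewrite mulmx0 mulmx1 alpha_disc0 mxE /= cabs_real normr1; apply.
- by move=> _ [x Dx <-]; rewrite {1}(mx11_scalar x) mul_mx_scalar; apply: hD.
- by rewrite /unit_disc /= mxE cabs0 ltr01.
Qed.

Lemma alpha_eq0 X : (forall c : C, D (c *: X)) -> alpha N D 0 X = 0.
Proof.
move=> hD; apply/eqP; rewrite eq_le alpha_ge0 andbT leNgt; apply/negP => ap.
have k0 : 0 <= 2 / alpha N D 0 X by rewrite divr_ge0 // ltW.
suff : 2 <= 1 :> R by lra.
have {1}<- : 2 / alpha N D 0 X * alpha N D 0 X = 2 by rewrite mulfVK ?gt_eqF.
rewrite -(ger0_norm k0) -cabs_real -alphaZ; apply: alpha_le1 => c _.
by rewrite scalerA; apply: hD.
Qed.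

End Contractible.

Section Hermitian.
Variable R : realType.
Local Notation C := (R[i]).

Lemma conjcD (x y : C) : conjc (x + y) = conjc x + conjc y.
Proof. exact: rmorphD. Qed.

Lemma conjcM (x y : C) : conjc (x * y) = conjc x * conjc y.
Proof. exact: rmorphM. Qed.

Lemma conjcN (x : C) : conjc (- x) = - conjc x.
Proof. exact: rmorphN. Qed.

Lemma ReD (x y : C) : complex.Re (x + y) = complex.Re x + complex.Re y.
Proof. by case: x; case: y. Qed.

Lemma Re_real_mul (r : R) (z : C) : complex.Re (r%:C * z) = r * complex.Re z.
Proof. by case: z => a b /=; ring. Qed.

Lemma mulcJ_cabs (x : C) : x * conjc x = (cabs x ^+ 2)%:C.
Proof. by rewrite cabs_sqr; case: x => a b; rewrite /= /conjc /=; congr (_ +i* _); ring. Qed.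

Lemma Re_mulcJ (x z : C) : complex.Re (x * z * conjc x) = cabs x ^+ 2 * complex.Re z.
Proof. by rewrite mulrAC mulcJ_cabs Re_real_mul. Qed.

Variables (N : nat) (s : 'cV[C]_N -> 'cV[C]_N -> C).
Hypothesis Hs : psd_hermitian s.

Lemma herm0l Z : s 0 Z = 0.
Proof. by case: Hs => lin _ _; have := lin 0 0 0 0 Z; rewrite !scale0r addr0 !mul0r addr0. Qed.

Lemma hermDl X Y Z : s (X + Y) Z = s X Z + s Y Z.
Proof. by case: Hs => lin _ _; have := lin 1 1 X Y Z; rewrite !scale1r !mul1r. Qed.

Lemma hermZl c X Z : s (c *: X) Z = c * s X Z.
Proof. by case: Hs => lin _ _; have := lin c 0 X 0 Z; rewrite scale0r addr0 herm0l mulr0 addr0. Qed.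

Lemma hermC X Y : s Y X = conjc (s X Y).
Proof. by case: Hs. Qed.

Lemma hermDr X Y Z : s Z (X + Y) = s Z X + s Z Y.
Proof. by rewrite (hermC (X + Y)) hermDl rmorphD /= -!hermC. Qed.

Lemma hermZr c X Z : s Z (c *: X) = conjc c * s Z X.
Proof. by rewrite (hermC (c *: X)) hermZl rmorphM /= -hermC. Qed.

Lemma herm0r Z : s Z 0 = 0.
Proof. by rewrite hermC herm0l rmorph0. Qed.

Lemma herm_suml I (r : seq I) (P : pred I) (F : I -> 'cV[C]_N) Z :
  s (\sum_(i <- r | P i) F i) Z = \sum_(i <- r | P i) s (F i) Z.
Proof. exact: (big_morph (s^~ Z) (fun X Y => hermDl X Y Z) (herm0l Z)). Qed.

Lemma herm_sumr I (r : seq I) (P : pred I) (F : I -> 'cV[C]_N) Z :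
  s Z (\sum_(i <- r | P i) F i) = \sum_(i <- r | P i) s Z (F i).
Proof. exact: (big_morph (s Z) (fun X Y => hermDr X Y Z) (herm0r Z)). Qed.

Lemma Im_herm_diag X : complex.Im (s X X) = 0.
Proof.
have := hermC X X; case: (s X X) => a b /= [] /eqP.
by rewrite -subr_eq0 opprK -mulr2n mulrn_eq0 /= => /eqP.
Qed.

Lemma Re_herm_diag_ge0 X : 0 <= complex.Re (s X X).
Proof. by case: Hs. Qed.

End Hermitian.

Section LeadSpan.
Variable R : realType.
Local Notation C := (R[i]).
Variables (N p : nat).
Hypothesis p_le_N : (p <= N)%N.

Definition lead_span : set 'cV[C]_N := [set Y | forall j : 'I_N, (p <= j)%N -> Y j 0 = 0].

Definition lead_vec (l : 'I_p) : 'cV[C]_N := delta_mx (widen_ord p_le_N l) 0.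

Let widen_inj : injective (widen_ord p_le_N).
Proof. by move=> x y hxy; apply: val_inj; exact: (congr1 val hxy). Qed.

Lemma lead_span_vec l : lead_span (lead_vec l).
Proof.
move=> j hj; rewrite mxE /= andbT; case: eqP => // hjl.
by move: hj; rewrite hjl /= leqNgt ltn_ord.
Qed.

Lemma lead_span_expand Y : lead_span Y -> Y = \sum_(l < p) Y (widen_ord p_le_N l) 0 *: lead_vec l.
Proof.
move=> hY; apply/matrixP => i k; rewrite summxE (ord1 k).
under eq_bigr => l _ do rewrite !mxE /= andbT.
case: (ltnP i p) => hi.
- rewrite (bigD1 (Ordinal hi)) //= big1 ?addr0.
    have -> : i == widen_ord p_le_N (Ordinal hi) by apply/eqP/val_inj.
    by rewrite mulr1; congr (Y _ _); apply: val_inj.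
  move=> l hl; case: eqP => [hil|]; last by rewrite mulr0.
  by move: hl; rewrite -(inj_eq val_inj) /= hil eqxx.
- rewrite hY // big1 // => l _; case: eqP => [hil|]; last by rewrite mulr0.
  by move: hi; rewrite hil /= leqNgt ltn_ord.
Qed.

Lemma lead_vec_basis : is_basis lead_span lead_vec.
Proof.
split; first exact: lead_span_vec.
- by move=> Y hY; exists (fun l => Y (widen_ord p_le_N l) 0); exact: lead_span_expand.
- move=> c hc l; have := congr1 (fun M : 'cV[C]_N => M (widen_ord p_le_N l) 0) hc.
  rewrite summxE mxE (bigD1 l) //= big1 ?addr0; first by rewrite !mxE eqxx /= mulr1.
  by move=> j hj; rewrite !mxE /= andbT (inj_eq widen_inj) eq_sym (negbTE hj) mulr0.
Qed.

Definition lead_coord_mx k (e : 'I_k -> 'cV[C]_N) : 'M[C]_(k, p) :=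
  \matrix_(j < k, l < p) e j (widen_ord p_le_N l) 0.

Lemma lead_coord_mx_free k (e : 'I_k -> 'cV[C]_N) :
  is_basis lead_span e -> row_free (lead_coord_mx e).
Proof.
case=> hU _ hind; apply: inj_row_free => v hv.
have : \sum_(j < k) v 0 j *: e j = 0.
  apply/matrixP => i c; rewrite summxE (ord1 c) !mxE.
  case: (ltnP i p) => hi; last by apply: big1 => j _; rewrite !mxE hU // mulr0.
  have := congr1 (fun M : 'rV[C]_p => M 0 (Ordinal hi)) hv; rewrite !mxE.
  apply: etrans; apply: eq_bigr => j _; rewrite !mxE; congr (_ * e j _ _); exact: val_inj.
by move=> /hind hc; apply/matrixP => i j; rewrite (ord1 i) mxE; exact: hc.
Qed.

Lemma lead_basis_size k (e : 'I_k -> 'cV[C]_N) : is_basis lead_span e -> k = p.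
Proof.
move=> hb; have := lead_coord_mx_free hb; rewrite /row_free => /eqP rk.
have kp : (k <= p)%N by rewrite -rk rank_leq_col.
case: hb => _ hsp _.
have /choice [cf hcf] : forall l, exists c : 'I_k -> C, lead_vec l = \sum_(j < k) c j *: e j.
  by move=> l; apply: hsp; exact: lead_span_vec.
pose Cm : 'M[C]_(p, k) := \matrix_(l, j) cf l j.
have CE1 : Cm *m lead_coord_mx e = 1%:M.
  apply/matrixP => l l'; rewrite !mxE.
  have := congr1 (fun M : 'cV[C]_N => M (widen_ord p_le_N l') 0) (hcf l).
  rewrite summxE !mxE /= andbT -(inj_eq widen_inj) eq_sym => ->.
  by apply: eq_bigr => j _; rewrite !mxE.
have := mxrankM_maxl Cm (lead_coord_mx e); rewrite CE1 mxrank1 => pk.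
by apply/eqP; rewrite eqn_leq kp (leq_trans pk (rank_leq_col Cm)).
Qed.

Lemma det_lead_coord_mx_neq0 (e : 'I_p -> 'cV[C]_N) :
  is_basis lead_span e -> \det (lead_coord_mx e) != 0.
Proof. by move=> /lead_coord_mx_free; rewrite row_free_unit unitmxE unitfE. Qed.

Lemma gram_det_change_basis s (Hs : psd_hermitian s) (e : 'I_p -> 'cV[C]_N) :
  (forall j, lead_span (e j)) ->
  gram_det s e = \det (lead_coord_mx e) * gram_det s lead_vec * conjc (\det (lead_coord_mx e)).
Proof.
move=> He; rewrite /gram_det.
have -> : \matrix_(j < p, l < p) s (e j) (e l) = lead_coord_mx e *m
    (\matrix_(j < p, l < p) s (lead_vec j) (lead_vec l)) *m (map_mx conjc (lead_coord_mx e))^T.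
  apply/matrixP => j l; rewrite !mxE.
  rewrite {1}(lead_span_expand (He j)) {1}(lead_span_expand (He l)).
  rewrite (herm_suml Hs); under eq_bigr => i _ do rewrite (hermZl Hs) (herm_sumr Hs).
  transitivity (\sum_i \sum_k e j (widen_ord p_le_N i) 0 *
      (conjc (e l (widen_ord p_le_N k) 0) * s (lead_vec i) (lead_vec k))).
    by apply: eq_bigr => i _; rewrite mulr_sumr; apply: eq_bigr => k _; rewrite (hermZr Hs).
  rewrite exchange_big /=; apply: eq_bigr => k _; rewrite !mxE mulr_suml.
  by apply: eq_bigr => i _; rewrite !mxE [conjc _ * _]mulrC mulrA.
by rewrite !det_mulmx det_tr det_map_mx.
Qed.

End LeadSpan.

Arguments lead_vec {R N p}.

Section WuLeadSpan.
Variable R : realType.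
Local Notation C := (R[i]).
Variables (N p : nat) (p_le_N : (p <= N)%N).
Variables (eta : 'cV[C]_N -> 'cV[C]_N -> R) (a : 'cV[C]_N).

Lemma cseminorm0 : cseminorm (fun _ : 'cV[C]_N => 0 : R).
Proof. by split=> [X|X Y|c X]; rewrite ?addr0 ?mulr0. Qed.

Lemma hprod_delta (j : 'I_N) (Y : 'cV[C]_N) : hprod (delta_mx j 0) Y = conjc (Y j 0).
Proof.
rewrite /hprod (bigD1 j) //= big1 ?addr0; first by rewrite mxE !eqxx mul1r.
by move=> i hi; rewrite mxE (negbTE hi) mul0r.
Qed.

Lemma Fset_Re_le t X : Fset eta a t -> complex.Re (t X X) <= eta a X ^+ 2.
Proof.
case=> Ht hb; have t0 := Re_herm_diag_ge0 Ht X.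
by rewrite -(sqr_sqrtr t0) ler_sqr ?nnegrE ?sqrtr_ge0 // (le_trans (sqrtr_ge0 _) (hb X)).
Qed.

Section Degeneracy.
Hypothesis eta_ge0 : forall X : 'cV[C]_N, 0 <= eta a X.
Hypothesis eta_eq0 : forall X : 'cV[C]_N, (forall j : 'I_N, (j < p)%N -> X j 0 = 0) -> eta a X = 0.
Hypothesis eta_dominates :
  forall X : 'cV[C]_N, (exists j : 'I_N, (j < p)%N /\ X j 0 != 0) ->
  exists q, [/\ cseminorm q, forall Y, q Y <= eta a Y & 0 < q X].

Lemma eta_hat_eq0 X : (eta_hat eta a X == 0) = [forall j : 'I_N, (j < p)%N ==> (X j 0 == 0)].
Proof.
set S := [set q X | q in [set q | cseminorm q /\ forall Y, q Y <= eta a Y]].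
have ubS : ubound S (eta a X) by move=> _ [q [_ hq] <-].
have S0 : S 0 by exists (fun _ => 0) => //; split; [exact: cseminorm0 | exact: eta_ge0].
have hat0 : 0 <= eta_hat eta a X by apply: (ub_le_sup (ex_intro _ _ ubS)).
apply/idP/forallP => [/eqP hat_eq0 j|hX].
  apply/implyP => hj; apply/negPn/negP => Xj.
  have [q [hq hqe qX]] := eta_dominates (ex_intro _ j (conj hj Xj)).
  have : q X <= eta_hat eta a X by apply: (ub_le_sup (ex_intro _ _ ubS)); exists q.
  by rewrite hat_eq0 leNgt qX.
rewrite eq_le hat0 andbT -(@eta_eq0 X); first exact: ge_sup (ex_intro _ _ S0) ubS.
by move=> j hj; apply/eqP; have := hX j; rewrite hj.
Qed.

Lemma Uset_lead_span : Uset eta a = lead_span p.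
Proof.
have VsetE X : Vset eta a X <-> forall j : 'I_N, (j < p)%N -> X j 0 = 0.
  rewrite /Vset /=; split=> [/eqP|hX]; last apply/eqP; rewrite eta_hat_eq0.
    by move=> /forallP hX j hj; apply/eqP; have := hX j; rewrite hj.
  by apply/forallP => j; apply/implyP => hj; apply/eqP/hX.
apply/funext => Y; apply/propext; split=> [hY j hj|hY X /VsetE hX].
  have /hY : Vset eta a (delta_mx j 0).
    apply/VsetE => i hi; rewrite mxE /= andbT; case: eqP => // hij.
    by move: hi; rewrite hij ltnNge hj.
  by rewrite hprod_delta => /eqP; rewrite conjc_eq0 => /eqP.
rewrite /hprod big1 // => i _; case: (ltnP i p) => hi; first by rewrite hX // mul0r.
by rewrite hY // rmorph0 mulr0.
Qed.

End Degeneracy.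

Section Maximal.
Hypothesis UsetE : Uset eta a = lead_span p.

Lemma mdim_lead_span : mdim eta a = p.
Proof.
rewrite /mdim UsetE.
have := @epsilon_spec nat (inhabits 0%N)
  (fun k => exists e : 'I_k -> 'cV[C]_N, is_basis (lead_span p) e).
case; first by exists p, (lead_vec p_le_N); exact: lead_vec_basis.
by move=> e /(lead_basis_size p_le_N).
Qed.

(* Since all bases of [U] have [p] elements and Gram determinants change by [|det|^2 > 0],
   the order on [Fset] can be read off the single basis [lead_vec]. *)
Lemma wprecE t s : psd_hermitian t -> psd_hermitian s ->
  wprec eta a t s <->
  complex.Re (gram_det t (lead_vec p_le_N)) <= complex.Re (gram_det s (lead_vec p_le_N)).
Proof.
move=> Ht Hs; split=> [[k [e []]]|le_ts]; last first.
  by exists p, (lead_vec p_le_N); rewrite UsetE; split=> //; exact: lead_vec_basis.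
rewrite UsetE => hb; have k_eq := lead_basis_size p_le_N hb; subst k.
have He : forall j, lead_span p (e j) by case: hb.
rewrite (gram_det_change_basis p_le_N Ht He) (gram_det_change_basis p_le_N Hs He) !Re_mulcJ.
by rewrite ler_pM2l // exprn_gt0 // cabs_gt0 // det_lead_coord_mx_neq0.
Qed.

Lemma smax_gram_ge s0 : Fset eta a s0 ->
  (forall t, Fset eta a t ->
     complex.Re (gram_det t (lead_vec p_le_N)) <= complex.Re (gram_det s0 (lead_vec p_le_N))) ->
  Fset eta a (smax eta a) /\
  complex.Re (gram_det s0 (lead_vec p_le_N)) <= complex.Re (gram_det (smax eta a) (lead_vec p_le_N)).
Proof.
move=> F0 s0_max; rewrite /smax.
have := @epsilon_spec _ (inhabits (fun _ _ => 0))
  (fun s => Fset eta a s /\ forall t, Fset eta a t -> wprec eta a t s).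
case.
  exists s0; split=> // t Ft; apply/wprecE; [by case: Ft | by case: F0 | exact: s0_max].
move=> Fm hm; split=> //; apply/wprecE; [by case: F0 | by case: Fm | exact: hm].
Qed.

End Maximal.
End WuLeadSpan.

Lemma amgm_le (R : realFieldType) (u w c : R) :
  0 <= u -> 0 <= w -> u + w <= 2 * c -> u * w <= c ^+ 2.
Proof.
move=> u0 w0 uwc; have := sqr_ge0 (u - w).
have : 0 <= (2 * c - (u + w)) * (2 * c + (u + w)) by rewrite mulr_ge0 //; lra.
by nra.
Qed.

Lemma amgm_eq (R : realFieldType) (u w c : R) :
  0 <= u -> 0 <= w -> u + w <= 2 * c -> c ^+ 2 <= u * w -> u = c.
Proof.
move=> u0 w0 uwc cuw; have uw : u = w.
  by apply/eqP; rewrite -subr_eq0 -sqrf_eq0 eq_le sqr_ge0 andbT; nra.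
by subst w; nra.
Qed.

Lemma det_mx22 (R : comNzRingType) (A : 'M[R]_2) : \det A = A 0 0 * A 1 1 - A 0 1 * A 1 0.
Proof.
rewrite (expand_det_row _ 0) !big_ord_recl big_ord0 /cofactor !det_mx11 !mxE /=.
rewrite addr0 !expr0 ?expr1 /= mul1r mulN1r mulrN.
by congr (_ * _ - _ * _); congr (A _ _); apply/val_inj.
Qed.

Lemma sqrtr_le (R : rcfType) (x y : R) : 0 <= y -> x <= y ^+ 2 -> Num.sqrt x <= y.
Proof. by move=> y0 xy; rewrite -(ger0_norm y0) -sqrtr_sqr ler_wsqrtr. Qed.

Lemma cseminormZ (R : realType) n (c : R) (q : 'cV[R[i]]_n -> R) :
  0 <= c -> cseminorm q -> cseminorm (fun X => c * q X).
Proof.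
move=> c0 [q0 qD qZ]; split=> [X|X Y|a X]; first exact: mulr_ge0.
- by rewrite -mulrDr ler_wpM2l.
- by rewrite qZ mulrCA.
Qed.

Lemma cabs_parallelogram (R : realType) (x y : R[i]) :
  cabs (x + y) ^+ 2 + cabs (x - y) ^+ 2 = 2 * (cabs x ^+ 2 + cabs y ^+ 2).
Proof. by rewrite !cabs_sqr; case: x => a b; case: y => c d /=; ring. Qed.

Section Example.
Variable R : realType.
Local Notation C := (R[i]).
Variable N : nat.
Hypothesis two_le_N : (2 <= N)%N.

Let N_gt0 : (0 < N)%N. Proof. exact: leq_trans two_le_N. Qed.
Let one_le_N : (1 <= N)%N. Proof. exact: leq_trans two_le_N. Qed.

Definition i0 : 'I_N := widen_ord two_le_N (0 : 'I_2).
Definition i1 : 'I_N := widen_ord two_le_N (1 : 'I_2).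
Definition e0 : 'cV[C]_N := delta_mx i0 0.
Definition e1 : 'cV[C]_N := delta_mx i1 0.

Lemma i0_neq_i1 : i0 != i1.
Proof. by rewrite -(inj_eq val_inj). Qed.

Lemma e0_i0 : e0 i0 0 = 1. Proof. by rewrite mxE !eqxx. Qed.
Lemma e0_i1 : e0 i1 0 = 0. Proof. by rewrite mxE eq_sym (negbTE i0_neq_i1). Qed.
Lemma e1_i0 : e1 i0 0 = 0. Proof. by rewrite mxE (negbTE i0_neq_i1). Qed.
Lemma e1_i1 : e1 i1 0 = 1. Proof. by rewrite mxE !eqxx. Qed.

Lemma ord_lt1 (j : 'I_N) : (j < 1)%N -> j = i0.
Proof. by move=> hj; apply: val_inj => /=; move: hj; case: (val j). Qed.

Lemma ord_lt2 (j : 'I_N) : (j < 2)%N -> j = i0 \/ j = i1.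
Proof.
by case: j => [[|[|k]] pj] // _; [left | right]; apply: val_inj.
Qed.

Lemma linf1E (q : C) (z : 'cV[C]_N) : linf 1 q i0 i1 z = z i0 0 + q * z i1 0.
Proof. by rewrite /linf mul1r. Qed.

Definition qm (m : nat) : R := (m.+1)%:R^-1.

Lemma qm_gt0 m : 0 < qm m.
Proof. by rewrite /qm invr_gt0 ltr0n. Qed.

Lemma qm_mulS m : qm m * (m.+1)%:R = 1.
Proof. by rewrite /qm mulVf // pnatr_eq0. Qed.

Definition Dcyl : set 'cV[C]_N := slab 1 0 i0 i0 1.

Definition Dm (m : nat) : set 'cV[C]_N :=
  Dcyl `&` slab 1 (qm m)%:C i0 i1 (5 / 4) `&` slab 1 (- qm m)%:C i0 i1 (5 / 4).

Lemma DcylE z : Dcyl z <-> cabs (z i0 0) < 1.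
Proof. by rewrite /Dcyl /slab /linf /= mul1r mul0r addr0. Qed.

Lemma Dcyl0 : Dcyl 0.
Proof. exact: slab0. Qed.

Lemma domain_Dcyl : domain Dcyl.
Proof. exact: domain_slab. Qed.

Lemma Dm0 m : Dm m 0.
Proof. by split; [split|]; apply: slab0; lra. Qed.

Lemma domain_Dm m : domain (Dm m).
Proof.
apply: starlike_domain; [|exact: Dm0|].
- by apply: copenI; [apply: copenI|]; exact: copen_slab.
- by apply: starlikeI; [apply: starlikeI|]; exact: starlike_slab.
Qed.

Lemma Dm_sub_Dcyl m : Dm m `<=` Dcyl.
Proof. by move=> z [[]]. Qed.

(* [x + r Q y] is the convex combination [(1 + r)/2 (x + Q y) + (1 - r)/2 (x - Q y)]. *)
Lemma cabs_mid_lt (r Q c : R) (x y : C) : -1 <= r <= 1 ->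
  cabs (x + Q%:C * y) < c -> cabs (x + (- Q)%:C * y) < c -> cabs (x + (r * Q)%:C * y) < c.
Proof.
move=> /andP[r_ge r_le] hp hm; set a := (1 + r) / 2; set b := (1 - r) / 2.
have ab1 : a + b = 1 by rewrite /a /b; field.
have a0 : 0 <= a by rewrite /a; lra.
have b0 : 0 <= b by rewrite /b; lra.
have -> : x + (r * Q)%:C * y = a%:C * (x + Q%:C * y) + b%:C * (x + (- Q)%:C * y).
  have -> : r = a - b by rewrite /a /b; field.
  rewrite -[x in LHS]mul1r -(rmorph1 (real_complex R)) -ab1.
  by rewrite !(rmorphD, rmorphM, rmorphB, rmorphN) /=; ring.
apply: le_lt_trans (cabsD _ _) _; rewrite !cabsM !cabs_real !ger0_norm //.
apply: (@le_lt_trans _ _ (Num.max (cabs (x + Q%:C * y)) (cabs (x + (- Q)%:C * y))));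
  last by rewrite gt_max hp hm.
rewrite -[leRHS]mul1r -ab1 mulrDl.
by apply: lerD; apply: ler_wpM2l; rewrite // le_max lexx ?orbT.
Qed.

Lemma Dm_subS m : Dm m `<=` Dm m.+1.
Proof.
move=> z [[Dz hp] hm]; rewrite /slab /= !linf1E in hp hm.
set r := qm m.+1 / qm m.
have qr : qm m.+1 = r * qm m by rewrite /r mulfVK // gt_eqF // qm_gt0.
have r_ge0 : 0 <= r by rewrite divr_ge0 // ltW // qm_gt0.
have r_le1 : r <= 1.
  by rewrite ler_pdivrMr ?qm_gt0 // mul1r lef_pV2 ?posrE ?ltr0n // ler_nat.
clearbody r; split; first split=> //; rewrite /slab /= linf1E qr -?mulNr;
  by apply: cabs_mid_lt => //; apply/andP; split; lra.
Qed.

Lemma bigcup_Dm : \bigcup_m Dm m = Dcyl.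
Proof.
apply/seteqP; split=> [z [m _ /Dm_sub_Dcyl //]|z Dz].
have z1 := cabs_ge0 (z i1 0); have /DcylE z0 := Dz.
pose m := Num.truncn (4 * cabs (z i1 0)).
have hq : qm m * cabs (z i1 0) < 1 / 4.
  by have := truncnS_gt (4 * cabs (z i1 0)); have := qm_mulS m; have := qm_gt0 m; nra.
exists m => //; split; first split=> //; rewrite /slab /= linf1E;
  apply: le_lt_trans (cabsD _ _) _;
  by rewrite cabsM cabs_real ?normrN ger0_norm ?(ltW (qm_gt0 m)); lra.
Qed.

Unset Implicit Arguments.
Variable alpha : forall n : nat, set 'cV[C]_n -> 'cV[C]_n -> 'cV[C]_n -> R.
Set Implicit Arguments.
Hypothesis Halpha : hol_contractible alpha.

Local Notation alphaD := (alpha N Dcyl 0).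
Local Notation alphaM m := (alpha N (Dm m) 0).

Lemma alphaD_ge0 (X : 'cV[C]_N) : 0 <= alphaD X.
Proof. exact: (alpha_ge0 Halpha N_gt0 domain_Dcyl Dcyl0). Qed.

Lemma alphaM_ge0 m (X : 'cV[C]_N) : 0 <= alphaM m X.
Proof. exact: (alpha_ge0 Halpha N_gt0 (domain_Dm m) (Dm0 m)). Qed.

Lemma cabs_le_alphaD (X : 'cV[C]_N) : cabs (X i0 0) <= alphaD X.
Proof.
have := cabs_linf_le_alpha Halpha N_gt0 domain_Dcyl Dcyl0 (p := 1) (q := 0) (i := i0) (j := i0) X.
by rewrite /linf mul1r mul0r addr0; apply=> z /DcylE; rewrite /linf mul1r mul0r addr0.
Qed.

Lemma alphaD_e0_le1 : alphaD e0 <= 1.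
Proof.
apply: (alpha_le1 Halpha N_gt0 domain_Dcyl) => zeta hz.
by apply/DcylE; rewrite mxE e0_i0 mulr1.
Qed.

Lemma alphaD_eq0 (X : 'cV[C]_N) : X i0 0 = 0 -> alphaD X = 0.
Proof.
move=> X0; apply: (alpha_eq0 Halpha N_gt0 domain_Dcyl Dcyl0) => c.
by apply/DcylE; rewrite mxE X0 mulr0 cabs0 ltr01.
Qed.

Lemma alphaM_eq0 m (X : 'cV[C]_N) : X i0 0 = 0 -> X i1 0 = 0 -> alphaM m X = 0.
Proof.
move=> X0 X1; apply: (alpha_eq0 Halpha N_gt0 (domain_Dm m) (Dm0 m)) => c.
by split; first split; rewrite /Dcyl /slab /linf /= !mxE ?X0 ?X1 !mulr0 addr0 cabs0 //; lra.
Qed.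

(* The forms defining [Dm m], rescaled by [4/5], map [Dm m] into the unit disc. *)
Lemma cabs_le_alphaM m (Q : R) (X : 'cV[C]_N) :
  (forall z, Dm m z -> cabs (z i0 0 + Q%:C * z i1 0) < 5 / 4) ->
  4 / 5 * cabs (X i0 0 + Q%:C * X i1 0) <= alphaM m X.
Proof.
move=> hD.
have linf45 z : cabs (linf (4 / 5)%:C (4 / 5 * Q)%:C i0 i1 z) =
    4 / 5 * cabs (z i0 0 + Q%:C * z i1 0).
  rewrite (_ : linf _ _ _ _ z = (4 / 5)%:C * (z i0 0 + Q%:C * z i1 0)).
    by rewrite cabsM cabs_real ger0_norm //; lra.
  by rewrite /linf rmorphM /=; ring.
rewrite -linf45; apply: (cabs_linf_le_alpha Halpha N_gt0 (domain_Dm m) (Dm0 m)) => z /hD.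
by rewrite linf45; lra.
Qed.

Definition Xs m (s : R) : 'cV[C]_N := e0 + ((s * (m.+1)%:R)%:C * 'i) *: e1.

Lemma Xs_i0 m s : Xs m s i0 0 = 1.
Proof. by rewrite !mxE !eqxx (negbTE i0_neq_i1) /= mulr0 addr0. Qed.

Lemma Xs_i1 m s : Xs m s i1 0 = (s * (m.+1)%:R)%:C * 'i.
Proof. by rewrite !mxE !eqxx eq_sym (negbTE i0_neq_i1) /= mulr1 add0r. Qed.

Lemma cabs_1_iunit (s : R) : s ^+ 2 = 1 -> cabs (1 + s%:C * 'i) = Num.sqrt 2.
Proof. by move=> s2; rewrite /cabs /=; congr Num.sqrt; lra. Qed.

(* The disc of radius [5 / (4 sqrt 2)] along [Xs m s] lies in [Dm m]. *)
Lemma alphaM_Xs_le m s : s ^+ 2 = 1 -> alphaM m (Xs m s) <= 4 / 5 * Num.sqrt 2.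
Proof.
move=> s2; set k := 4 / 5 * Num.sqrt 2.
have k2 : k ^+ 2 = 32 / 25 by rewrite exprMn sqr_sqrtr ?ler0n //; field.
have k_gt0 : 0 < k by rewrite mulr_gt0 ?sqrtr_gt0 ?ltr0n //; lra.
have -> : Xs m s = k%:C *: (k^-1%:C *: Xs m s).
  by rewrite scalerA -rmorphM mulfV ?gt_eqF // rmorph1 scale1r.
rewrite (alphaZ Halpha N_gt0 (domain_Dm m) (Dm0 m)) cabs_real ger0_norm ?(ltW k_gt0) // ger_pMr //.
apply: (alpha_le1 Halpha N_gt0 (domain_Dm m)) => zeta hz; set w := zeta * k^-1%:C.
have w_lt : cabs w < k^-1.
  by rewrite cabsM cabs_real ger0_norm ?invr_ge0 ?ltW // gtr_pMl ?invr_gt0.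
have w_lt1 : cabs w < 1.
  apply: lt_le_trans w_lt _; rewrite invr_le1 ?unitfE ?gt_eqF //; nra.
have lt54 t : t ^+ 2 = 1 -> cabs (w * (1 + t%:C * 'i)) < 5 / 4.
  have kinv : k^-1 * Num.sqrt 2 = 5 / 4 by rewrite /k; field; rewrite gt_eqF ?sqrtr_gt0 ?ltr0n.
  by move=> t2; rewrite cabsM cabs_1_iunit // -kinv ltr_pM2r ?sqrtr_gt0 ?ltr0n.
have lin_Xs (Q : R) : linf 1 Q%:C i0 i1 (Xs m s) = 1 + (Q * (s * (m.+1)%:R))%:C * 'i.
  by rewrite linf1E Xs_i0 Xs_i1 !rmorphM /=; ring.
split; first split; rewrite /Dcyl /slab /= !linfZ mulrA.
- by rewrite /linf Xs_i0 !mulr1 addr0 mulr1.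
- by rewrite lin_Xs mulrCA qm_mulS mulr1; apply: lt54.
- by rewrite lin_Xs mulNr mulrCA qm_mulS mulr1; apply: lt54; rewrite sqrrN.
Qed.

Definition dform (k0 k1 : R) (X Y : 'cV[C]_N) : C :=
  k0%:C * (X i0 0 * conjc (Y i0 0)) + k1%:C * (X i1 0 * conjc (Y i1 0)).

Lemma Re_dform_diag k0 k1 X :
  complex.Re (dform k0 k1 X X) = k0 * cabs (X i0 0) ^+ 2 + k1 * cabs (X i1 0) ^+ 2.
Proof. by rewrite /dform !mulcJ_cabs -!rmorphM -rmorphD. Qed.

Lemma dform_psd k0 k1 : 0 <= k0 -> 0 <= k1 -> psd_hermitian (dform k0 k1).
Proof.
move=> k0_ge0 k1_ge0; split=> [a b X Y Z|X Y|X].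
- by rewrite /dform !mxE; ring.
- by rewrite /dform conjcD !conjcM !conjcK !conjc_real; ring.
- by rewrite Re_dform_diag addr_ge0 // mulr_ge0 // sqr_ge0.
Qed.

Lemma dform_e k0 k1 : [/\ dform k0 k1 e0 e0 = k0%:C, dform k0 k1 e1 e1 = k1%:C,
  dform k0 k1 e0 e1 = 0 & dform k0 k1 e1 e0 = 0].
Proof.
rewrite /dform e0_i0 e0_i1 e1_i0 e1_i1 conjc1 conjc0.
by split; rewrite ?mulr0 ?mulr1 ?addr0 ?add0r ?mul0r ?mulr0.
Qed.

Lemma gram_det1 t : gram_det t (lead_vec one_le_N) = t e0 e0.
Proof.
rewrite /gram_det det_mx11 mxE; congr t; rewrite /lead_vec /e0; congr delta_mx;
  exact: val_inj.
Qed.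

Lemma gram_det2 t : gram_det t (lead_vec two_le_N) = t e0 e0 * t e1 e1 - t e0 e1 * t e1 e0.
Proof. by rewrite /gram_det det_mx22 !mxE. Qed.

Lemma Re_gram_det2_le t : psd_hermitian t ->
  complex.Re (gram_det t (lead_vec two_le_N)) <= complex.Re (t e0 e0) * complex.Re (t e1 e1).
Proof.
move=> Ht; rewrite gram_det2 (hermC Ht e0 e1).
move: (Im_herm_diag Ht e0) (Im_herm_diag Ht e1).
by case: (t e0 e0) => a b; case: (t e1 e1) => c d; case: (t e0 e1) => u v /= -> ->; nra.
Qed.

Lemma Uset_Dcyl : Uset (alpha N Dcyl) 0 = lead_span 1.
Proof.
apply: Uset_lead_span; first exact: alphaD_ge0.
- by move=> X hX; apply: alphaD_eq0; apply: hX.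
- move=> X [j [/ord_lt1 -> X0]]; exists (fun Y => cabs (linf 1 0 i0 i0 Y)).
  split; first exact: cseminorm_linf.
  + by move=> Y; rewrite /linf mul1r mul0r addr0; exact: cabs_le_alphaD.
  + by rewrite /linf mul1r mul0r addr0 cabs_gt0.
Qed.

Lemma Wt_Dcyl : Wt (alpha N Dcyl) 0 e0 = 1.
Proof.
have F0 : Fset (alpha N Dcyl) 0 (dform 1 0).
  split; first by apply: dform_psd; rewrite ?ler01.
  move=> X; rewrite Re_dform_diag mul1r mul0r addr0.
  by apply: sqrtr_le; rewrite ?alphaD_ge0 // lerXn2r ?nnegrE ?cabs_ge0 ?alphaD_ge0 ?cabs_le_alphaD.
have t00_le1 t : Fset (alpha N Dcyl) 0 t -> complex.Re (t e0 e0) <= 1.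
  move=> Ft; apply: le_trans (Fset_Re_le e0 Ft) _.
  by have := alphaD_e0_le1; have := alphaD_ge0 e0; nra.
have dform_max t : Fset (alpha N Dcyl) 0 t ->
    complex.Re (gram_det t (lead_vec one_le_N)) <= complex.Re (gram_det (dform 1 0) (lead_vec one_le_N)).
  by move=> Ft; rewrite !gram_det1; have [-> _ _ _] := dform_e 1 0; exact: t00_le1.
have [/t00_le1 smax_le] := smax_gram_ge Uset_Dcyl F0 dform_max.
rewrite !gram_det1; have [-> _ _ _] := dform_e 1 0 => /= smax_ge.
by rewrite /Wt (_ : complex.Re _ = 1) ?sqrtr1 //; apply/eqP; rewrite eq_le smax_le smax_ge.
Qed.

Lemma W_Dcyl : W (alpha N Dcyl) 0 e0 = 1.
Proof. by rewrite /W (mdim_lead_span one_le_N Uset_Dcyl) Wt_Dcyl sqrtr1 mulr1. Qed.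

Lemma linf_pm_eq0 m (X : 'cV[C]_N) :
  X i0 0 + (qm m)%:C * X i1 0 = 0 -> X i0 0 + (- qm m)%:C * X i1 0 = 0 ->
  X i0 0 = 0 /\ X i1 0 = 0.
Proof.
move=> hp hm.
have : (qm m + qm m)%:C * X i1 0 = 0.
  by rewrite -[RHS](subrr 0) -{1}hp -hm rmorphD rmorphN /=; ring.
have q2 : (qm m + qm m)%:C != 0.
  by apply/eqP => /(congr1 (@complex.Re R)) /=; have := qm_gt0 m; lra.
move=> /eqP; rewrite mulf_eq0 (negbTE q2) /= => /eqP X1.
by move: hp; rewrite X1 mulr0 addr0.
Qed.

Lemma Uset_Dm m : Uset (alpha N (Dm m)) 0 = lead_span 2.
Proof.
apply: Uset_lead_span; first exact: alphaM_ge0.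
- by move=> X hX; apply: alphaM_eq0; apply: hX.
move=> X [j [/ord_lt2 hj Xj]].
suff [Q [DQ XQ]] : exists Q : R, (forall z, Dm m z -> cabs (z i0 0 + Q%:C * z i1 0) < 5 / 4)
    /\ X i0 0 + Q%:C * X i1 0 != 0.
  exists (fun Y => 4 / 5 * cabs (linf 1 Q%:C i0 i1 Y)); split.
  - by apply: cseminormZ; [lra | exact: cseminorm_linf].
  - by move=> Y; rewrite linf1E; exact: cabs_le_alphaM.
  - by rewrite linf1E mulr_gt0 ?cabs_gt0 //; lra.
have [hp|hp] := eqVneq (X i0 0 + (qm m)%:C * X i1 0) 0; last first.
  by exists (qm m); split=> // z [[_ Dz] _]; rewrite -linf1E.
have [hm|hm] := eqVneq (X i0 0 + (- qm m)%:C * X i1 0) 0; last first.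
  by exists (- qm m); split=> // z [_ Dz]; rewrite -linf1E.
by have [X0 X1] := linf_pm_eq0 hp hm; move: Xj; case: hj => ->; rewrite ?X0 ?X1 eqxx.
Qed.

Definition sM m := dform (16 / 25) (16 / 25 * qm m ^+ 2).

Lemma Fset_sM m : Fset (alpha N (Dm m)) 0 (sM m).
Proof.
split; first by apply: dform_psd; [lra | apply: mulr_ge0; [lra | exact: sqr_ge0]].
move=> X; apply: sqrtr_le; first exact: alphaM_ge0.
have hp : 4 / 5 * cabs (X i0 0 + (qm m)%:C * X i1 0) <= alphaM m X.
  by apply: cabs_le_alphaM => z [[_]]; rewrite /slab /= linf1E.
have hm : 4 / 5 * cabs (X i0 0 - (qm m)%:C * X i1 0) <= alphaM m X.
  by rewrite -mulNr -rmorphN; apply: cabs_le_alphaM => z [_]; rewrite /slab /= linf1E.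
have := cabs_parallelogram (X i0 0) ((qm m)%:C * X i1 0).
rewrite Re_dform_diag cabsM cabs_real ger0_norm ?(ltW (qm_gt0 m)) //.
have := cabs_ge0 (X i0 0 + (qm m)%:C * X i1 0); have := cabs_ge0 (X i0 0 - (qm m)%:C * X i1 0).
by nra.
Qed.

Lemma Fset_Dm_diag_le m t : Fset (alpha N (Dm m)) 0 t ->
  complex.Re (t e0 e0) + (m.+1)%:R ^+ 2 * complex.Re (t e1 e1) <= 32 / 25.
Proof.
move=> Ft; have Ht : psd_hermitian t by case: Ft.
have Xs_le s : s ^+ 2 = 1 -> complex.Re (t (Xs m s) (Xs m s)) <= 32 / 25.
  move=> s2; apply: le_trans (Fset_Re_le _ Ft) _.
  have := alphaM_Xs_le m s2; have := alphaM_ge0 m (Xs m s).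
  have : (4 / 5 * Num.sqrt 2) ^+ 2 = 32 / 25 :> R by rewrite exprMn sqr_sqrtr ?ler0n //; field.
  by nra.
have t_expand (b : C) : t (e0 + b *: e1) (e0 + b *: e1) =
    t e0 e0 + conjc b * t e0 e1 + b * t e1 e0 + b * conjc b * t e1 e1.
  by rewrite (hermDl Ht) (hermZl Ht) !(hermDr Ht) !(hermZr Ht); ring.
set b : C := ((m.+1)%:R)%:C * 'i.
have Xs1 : Xs m 1 = e0 + b *: e1 by rewrite /Xs mul1r.
have XsN1 : Xs m (-1) = e0 + (- b) *: e1 by rewrite /Xs mulN1r rmorphN mulNr.
have bb : b * conjc b = ((m.+1)%:R ^+ 2)%:C.
  by rewrite mulcJ_cabs cabs_sqr /b /=; congr _%:C; ring.
have : t (Xs m 1) (Xs m 1) + t (Xs m (-1)) (Xs m (-1)) =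
    (t e0 e0 + t e0 e0) + (b * conjc b * t e1 e1 + b * conjc b * t e1 e1).
  by rewrite Xs1 XsN1 !t_expand conjcN; ring.
rewrite bb => /(congr1 (@complex.Re R)); rewrite !ReD !Re_real_mul => hsum.
by have := Xs_le 1 (expr1n _ _); have := Xs_le (-1) (etrans (sqrrN _) (expr1n _ _)); lra.
Qed.

Lemma Wt_Dm m : Wt (alpha N (Dm m)) 0 e0 = 4 / 5.
Proof.
set M2 : R := (m.+1)%:R ^+ 2.
have M2_gt0 : 0 < M2 by rewrite exprn_gt0 ?ltr0n.
pose u (t : 'cV[C]_N -> 'cV[C]_N -> C) := complex.Re (t e0 e0).
pose w (t : 'cV[C]_N -> 'cV[C]_N -> C) := M2 * complex.Re (t e1 e1).
have F_bounds t : Fset (alpha N (Dm m)) 0 t -> [/\ 0 <= u t, 0 <= w t,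
    u t + w t <= 2 * (16 / 25) & M2 * complex.Re (gram_det t (lead_vec two_le_N)) <= u t * w t].
  move=> Ft; have Ht : psd_hermitian t by case: Ft.
  split; [exact: Re_herm_diag_ge0 | by rewrite /w mulr_ge0 ?(ltW M2_gt0) ?Re_herm_diag_ge0 | |].
  - by have := Fset_Dm_diag_le Ft; rewrite -/M2 /u /w; lra.
  - by rewrite /u /w mulrCA ler_pM2l // Re_gram_det2_le.
have gram_sM : M2 * complex.Re (gram_det (sM m) (lead_vec two_le_N)) = (16 / 25) ^+ 2.
  rewrite gram_det2 /sM; have [-> -> -> ->] := dform_e (16 / 25) (16 / 25 * qm m ^+ 2).
  have qM2 : qm m ^+ 2 * M2 = 1 by rewrite /M2 -exprMn qm_mulS expr1n.
  by rewrite mulr0 subr0 -rmorphM /= -[RHS]mulr1 -qM2; ring.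
have sM_max t : Fset (alpha N (Dm m)) 0 t ->
    complex.Re (gram_det t (lead_vec two_le_N)) <= complex.Re (gram_det (sM m) (lead_vec two_le_N)).
  move=> /F_bounds [u0 w0 uw gt]; rewrite -(ler_pM2l M2_gt0) gram_sM.
  exact: le_trans gt (amgm_le u0 w0 uw).
have [/F_bounds [u0 w0 uw gt]] := smax_gram_ge (Uset_Dm m) (Fset_sM m) sM_max.
rewrite -(ler_pM2l M2_gt0) gram_sM => ge.
have := amgm_eq u0 w0 uw (le_trans ge gt); rewrite /Wt /u => ->.
by rewrite (_ : 16 / 25 = (4 / 5) ^+ 2) ?sqrtr_sqr ?ger0_norm //; [lra | rewrite expr2; field].
Qed.

Lemma W_Dm m : W (alpha N (Dm m)) 0 e0 = Num.sqrt 2 * (4 / 5).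
Proof. by rewrite /W (mdim_lead_span two_le_N (Uset_Dm m)) Wt_Dm. Qed.

End Example.

Lemma cvg_cst_eq (R : realType) (a b : R) : (fun _ : nat => a) @ \oo --> b -> a = b.
Proof. exact: (cvg_unique _ (cvg_cst a)). Qed.

Local Close Scope complex_scope.

Theorem proposition3p7 (R : realType)
    (alpha : forall n : nat, set 'cV[R[i]]_n -> 'cV[R[i]]_n -> 'cV[R[i]]_n -> R)
    (Halpha : hol_contractible alpha) (n : nat) (hn : (3 <= n)%N) :
  exists (D : set 'cV[R[i]]_n) (Dm : nat -> set 'cV[R[i]]_n),
    [/\ domain D,
        forall m, domain (Dm m),
        forall m, Dm m `<=` Dm m.+1,
        forall m, Dm m `<=` D &
        \bigcup_m Dm m = D] /\
        ~ (forall a X, D a ->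
             (fun m => Wt (alpha n (Dm m)) a X) @ \oo --> Wt (alpha n D) a X) /\
        ~ (forall a X, D a ->
             (fun m => W (alpha n (Dm m)) a X) @ \oo --> W (alpha n D) a X).
Proof.
have two_le_n : (2 <= n)%N by apply: ltnW.
exists (Dcyl two_le_n), (Dm two_le_n); split.
  by split; [exact: domain_Dcyl | exact: domain_Dm | exact: Dm_subS | exact: Dm_sub_Dcyl |
    exact: bigcup_Dm].
split=> converge; have := converge 0 (e0 R two_le_n) (Dcyl0 R two_le_n).
- by rewrite (Wt_Dcyl two_le_n Halpha) (funext (Wt_Dm two_le_n Halpha)) => /cvg_cst_eq; lra.
- rewrite (W_Dcyl two_le_n Halpha) (funext (W_Dm two_le_n Halpha)) => /cvg_cst_eq.
  have : Num.sqrt 2 ^+ 2 = 2 :> R by rewrite sqr_sqrtr ?ler0n.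
  by nra.
Qed.
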